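(* Let $n\ge 3$ and let $f(x)=\sum_{i=0}^n a_ix^i$ be a complex polynomial with $a_n\ne 0$, written as $f(x)=a_n(x+x_1)\cdots(x+x_n)$ with $x_1,\dots,x_n\in\mathbb{C}$. For each of the $n!$ permutations $\sigma_s$ ($s=1,\dots,n!$) of the positions $\{1,\dots,n\}$, let $x_{is}=x_{\sigma_s(i)}$ and define $b_{1s},\dots,b_{(n-1)s}$ by $x_{is}=x_{(i-1)s}+\sum_{j=1}^{i-1}b_{js}$ for $i=2,\dots,n$. Let $D_n=(n-1)!^2a_{n-1}^2-2\,n!\,(n-2)!\,a_na_{n-2}$. Then $$\frac{D_n}{a_n^2}=-\frac{1}{3}(n-1)!\sum_{s=1}^{n!}b_{1s}b_{2s};$$ and if $n\ge 4$, then for every $i=0,\dots,n-4$, $$\frac{D_n}{a_n^2}=(n-1)!\sum_{s=1}^{n!}b_{(1+i)s}b_{(3+i)s},\qquad \frac{D_n}{a_n^2}=-\frac{1}{4}(n-1)!\sum_{s=1}^{n!}b_{(2+i)s}b_{(3+i)s}.$$ Moreover, for all indices $1\le j<k\le n-1$ with $(j,k)$ not of the form $(1,2)$, $(1+i,3+i)$ or $(2+i,3+i)$ with $0\le i\le n-4$, one has $\sum_{s=1}^{n!}b_{js}b_{ks}=0$.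
   Context: The defining relations are equivalent to $b_{1s}=x_{2s}-x_{1s}$ and $b_{js}=x_{(j+1)s}-2x_{js}+x_{(j-1)s}$ for $2\le j\le n-1$. *)

From HB Require Import structures.
From mathcomp Require Import all_boot all_order all_algebra all_fingroup.
Set Implicit Arguments. Unset Strict Implicit. Unset Printing Implicit Defensive.
Import Order.TTheory GRing.Theory Num.Theory.
Local Open Scope ring_scope.

(* 1-based access to the permuted roots: xperm x s i = x_{sigma_s(i)} for
   1 <= i <= n (positions are 'I_n, i.e. 0-based internally); 0 outside. *)
Definition xperm (C : nzRingType) (n : nat) (x : 'I_n -> C) (s : 'S_n) (i : nat) : C :=
  match (insub i.-1 : option 'I_n) with
  | Some k => x (s k)
  | None => 0
  end.

From HB Require Import structures.
From mathcomp Require Import all_boot all_order all_algebra all_fingroup.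
From mathcomp Require Import zify ring.
Set Implicit Arguments.
Unset Strict Implicit.
Unset Printing Implicit Defensive.
Import Order.TTheory GRing.Theory Num.Theory.
Local Open Scope ring_scope.

(* Write E(p, q) = sum_s x_(s p) x_(s q) for positions p, q. Since S_n acts
   2-transitively on positions, E(p, q) only depends on whether p = q, and
   summing over all positions gives E(p, p) = (n-1)! sum x_i^2 and, for p <> q,
   E(p, q) = (n-2)! ((sum x_i)^2 - sum x_i^2). Each b_j is a linear form c_j in
   the permuted roots whose coefficients sum to 0, hence
   sum_s b_j b_k = (E(p, p) - E(p, q)) <c_j, c_k>
                 = (n-2)! (n sum x_i^2 - (sum x_i)^2) <c_j, c_k>,
   while Vieta's formulas turn D_n / a_n^2 into (n-1)! times the same constant.
   The Gram matrix of c_1 = e_2 - e_1 and c_j = e_(j+1) - 2 e_j + e_(j-1)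
   has the entries -3, 1, -4 and 0 of the statement. *)

Lemma fact_predn n : (0 < n)%N -> n`! = (n * n.-1`!)%N.
Proof. by case: n => // n _; rewrite factS. Qed.

Lemma fact_pred2 n : (1 < n)%N -> n.-1`! = (n.-1 * (n - 2)`!)%N.
Proof. by move=> n_gt1; rewrite subn2 fact_predn //; lia. Qed.

Section ProdXaddC.
Variables (R : comNzRingType) (I : Type).
Implicit Types (r : seq I) (F : I -> R).

Lemma prod_XaddC_XsubC r F :
  \prod_(i <- r) ('X + (F i)%:P) = \prod_(i <- r) ('X - (- F i)%:P).
Proof. by apply: eq_bigr => i _; rewrite polyCN opprK. Qed.

Lemma coef_prod_XaddC_size r F : (\prod_(i <- r) ('X + (F i)%:P))`_(size r) = 1.
Proof.
have /monicP := monic_prod_XsubC r xpredT (fun i => - F i).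
by rewrite -prod_XaddC_XsubC lead_coefE prod_XaddC_XsubC size_prod_XsubC.
Qed.

(* The index shifts by ['X] avoid truncated subtraction in [size r - 1], [size r - 2]. *)
Lemma coef_prod_XaddC r F (p := \prod_(i <- r) ('X + (F i)%:P)) :
  ('X * p)`_(size r) = \sum_(i <- r) F i /\
  ('X * ('X * p))`_(size r) *+ 2 = (\sum_(i <- r) F i) ^+ 2 - \sum_(i <- r) F i ^+ 2.
Proof.
rewrite {}/p; elim: r => [|i r [IH1 IH2]].
  by rewrite !big_nil !coefXM /= mul0rn expr0n subr0.
have top := coef_prod_XaddC_size r F.
rewrite !big_cons mulrDl mul_polyC !mulrDr -!scalerAr.
split; rewrite coefD coefZ !(coefXM _ (size r).+1) /=.
  by rewrite IH1 top mulr1 addrC.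
rewrite IH1 mulrnDl {}IH2 -mulr_natl; ring.
Qed.

End ProdXaddC.

Section Vectors.
Variables (R : comNzRingType) (n : nat).
Implicit Types (u v : 'I_n -> R) (i j k : nat).

Definition dotv u v : R := \sum_p u p * v p.

Lemma dotvC u v : dotv u v = dotv v u.
Proof. by apply: eq_bigr => p _; rewrite mulrC. Qed.

Definition unitv i : 'I_n -> R := fun p => (p.+1 == i)%:R.

Lemma dotv_unitv_l i v (lt_i : (i.-1 < n)%N) : (0 < i)%N ->
  dotv (unitv i) v = v (Ordinal lt_i).
Proof.
move=> i_gt0; rewrite /dotv (bigD1 (Ordinal lt_i)) //= big1 => [|p neq_p].
  by rewrite /unitv /= prednK // eqxx mul1r addr0.
rewrite /unitv; case: eqP => [eq_pi|]; last by rewrite mul0r.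
by case/eqP: neq_p; apply/val_inj; rewrite /= -eq_pi.
Qed.

Lemma dotv_unitv i j : (0 < i <= n)%N -> dotv (unitv i) (unitv j) = (i == j)%:R.
Proof.
case/andP=> i_gt0 le_in; have lt_i : (i.-1 < n)%N by lia.
by rewrite (dotv_unitv_l _ lt_i) // /unitv /= prednK.
Qed.

Lemma xperm_dotv (x : 'I_n -> R) (s : 'S_n) i : (0 < i)%N ->
  xperm x s i = dotv (unitv i) (x \o s).
Proof.
move=> i_gt0; rewrite /xperm; case: insubP => [k _ val_k|].
  have lt_i : (i.-1 < n)%N by rewrite -val_k ltn_ord.
  by rewrite (dotv_unitv_l _ lt_i) //=; congr (x (s _)); apply: val_inj.
move=> not_lt; rewrite /dotv big1 // => p _; rewrite /unitv.
case: eqP => [eq_pi|_]; last by rewrite mul0r.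
by move: not_lt; rewrite -eq_pi ltn_ord.
Qed.

Lemma sum_unitv i : (0 < i <= n)%N -> \sum_p unitv i p = 1.
Proof.
case/andP=> i_gt0 le_in; have lt_i : (i.-1 < n)%N by lia.
transitivity (dotv (unitv i) (fun=> 1)); last exact: dotv_unitv_l.
by apply: eq_bigr => p _; rewrite mulr1.
Qed.

(* [b_j] as a linear form in the permuted roots (see [recurrence_second_diff]). *)
Definition bvec j : 'I_n -> R := fun p =>
  if j == 1%N then unitv 2%N p - unitv 1%N p
  else unitv j.+1 p - unitv j p *+ 2 + unitv j.-1 p.

Lemma dotv_bvec j v : dotv (bvec j) v =
  if j == 1%N then dotv (unitv 2%N) v - dotv (unitv 1%N) v
  else dotv (unitv j.+1) v - dotv (unitv j) v *+ 2 + dotv (unitv j.-1) v.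
Proof.
rewrite /dotv /bvec; case: eqP => _; rewrite -?sumrMnl -?sumrB -?big_split /=.
all: by apply: eq_bigr => p _; ring.
Qed.

Lemma sum_bvec j : (0 < j < n)%N -> \sum_p bvec j p = 0.
Proof.
move=> lt_jn; transitivity (dotv (bvec j) (fun=> 1)).
  by apply: eq_bigr => p _; rewrite mulr1.
have dot1 i : (0 < i <= n)%N -> dotv (unitv i) (fun=> 1) = 1.
  by move=> lt_in; rewrite -[RHS](sum_unitv lt_in); apply: eq_bigr => p _; rewrite mulr1.
rewrite dotv_bvec; case: eqP => [_|j_ne1]; rewrite !dot1; try lia.
  by rewrite subrr.
by rewrite mulr2n opprD addrA subrr sub0r addNr.
Qed.

Lemma dotv_bvec_bvec j k : (0 < j)%N -> (j < k < n)%N ->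
  dotv (bvec j) (bvec k) =
  if k == j.+1 then (if j == 1%N then - 3%:R else - 4%:R)
  else if k == j.+2 then 1 else 0.
Proof.
move=> j_gt0 lt_jkn.
rewrite dotv_bvec !(dotvC (unitv _)) !dotv_bvec !dotv_unitv; try lia.
have -> : (k == 1%N) = false by apply/eqP; lia.
by repeat (case: eqP => ?; try (exfalso; lia)); rewrite /=; ring.
Qed.

End Vectors.

Arguments bvec {R n} j.

Section SecondDifferences.
Variables (R : comNzRingType) (n : nat) (X b : nat -> R).
Hypothesis recX : forall i, (2 <= i <= n)%N -> X i = X i.-1 + \sum_(1 <= j < i) b j.

Lemma recurrence_second_diff j : (0 < j < n)%N ->
  b j = if j == 1%N then X 2%N - X 1%N else X j.+1 - X j *+ 2 + X j.-1.
Proof.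
move=> lt_jn.
have diffX i : (0 < i < n)%N -> X i.+1 - X i = \sum_(1 <= l < i.+1) b l.
  by move=> lt_in; rewrite (@recX i.+1) 1?addrC ?addKr //; lia.
case: j lt_jn => [//|[|j]] lt_jn /=; first by rewrite diffX ?big_nat1.
have := diffX j.+2 lt_jn; rewrite big_nat_recr //= -diffX; last by lia.
by move=> diffE; apply: (addrI (X j.+2 - X j.+1)); rewrite -diffE; ring.
Qed.

End SecondDifferences.

Section PermMoment.
Variables (R : comNzRingType) (n : nat) (x : 'I_n -> R).

Definition perm_moment (p q : 'I_n) : R := \sum_(s : 'S_n) x (s p) * x (s q).

Lemma perm_momentJ (t : 'S_n) p q : perm_moment (t p) (t q) = perm_moment p q.
Proof.
rewrite /perm_moment [RHS](reindex_inj (mulgI t)) /=.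
by apply: eq_bigr => s _; rewrite !permM.
Qed.

(* [S_n] acts 2-transitively: a permutation maps [(p', q')] to [(p, q)]. *)
Lemma perm_moment_eq p q p' q' :
  (p == q) = (p' == q') -> perm_moment p q = perm_moment p' q'.
Proof.
have [<-|neq_pq] := eqVneq p q => [/esym/eqP <-|/esym/negbT neq_pq'].
  by rewrite -(perm_momentJ (tperm p' p) p') tpermL.
pose u := tperm p' p; pose v := tperm (u q') q.
have neq_uq' : u q' != p by rewrite -(tpermL p' p) (inj_eq perm_inj) eq_sym.
by rewrite -(perm_momentJ (u * v) p') !permM /v !tpermL tpermD // eq_sym.
Qed.

Lemma sum_perm_moment_diag : \sum_p perm_moment p p = n`!%:R * \sum_i x i ^+ 2.
Proof.
rewrite exchange_big /= (eq_bigr (fun=> \sum_i x i ^+ 2)).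
  by rewrite sumr_const card_Sn mulr_natl.
move=> s _; rewrite [RHS](reindex_inj (@perm_inj _ s)) /=.
by apply: eq_bigr => i _; rewrite expr2.
Qed.

Lemma sum_perm_moment : \sum_p \sum_q perm_moment p q = n`!%:R * (\sum_i x i) ^+ 2.
Proof.
under eq_bigr do rewrite exchange_big /=.
rewrite exchange_big /= (eq_bigr (fun=> (\sum_i x i) ^+ 2)).
  by rewrite sumr_const card_Sn mulr_natl.
move=> s _; rewrite expr2 mulr_suml [RHS](reindex_inj (@perm_inj _ s)) /=.
by apply: eq_bigr => p _; rewrite mulr_sumr [RHS](reindex_inj (@perm_inj _ s)).
Qed.

End PermMoment.

Section PermMomentValue.
Variables (R : numDomainType) (n : nat) (x : 'I_n -> R).

Lemma perm_moment_diag p : perm_moment x p p = (n.-1)`!%:R * \sum_i x i ^+ 2.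
Proof.
have n_gt0 : (0 < n)%N by case: p => /= i; lia.
apply: (@mulfI _ n%:R); first by rewrite pnatr_eq0 -lt0n.
have := sum_perm_moment_diag x.
rewrite (eq_bigr (fun=> perm_moment x p p)) => [|q _]; last first.
  by apply: perm_moment_eq; rewrite !eqxx.
rewrite sumr_const card_ord => sumE.
by rewrite mulr_natl sumE fact_predn // natrM mulrA.
Qed.

Lemma perm_moment_offdiag p q : p != q ->
  perm_moment x p q = (n - 2)`!%:R * ((\sum_i x i) ^+ 2 - \sum_i x i ^+ 2).
Proof.
move=> neq_pq.
have n_gt1 : (1 < n)%N.
  move: neq_pq; apply: contraNT; rewrite -leqNgt => n_le1.
  by apply/eqP/val_inj => /=; move: (ltn_ord p) (ltn_ord q); lia.
apply: (@mulfI _ (n * n.-1)%:R).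
  by rewrite pnatr_eq0 muln_eq0; apply/norP; split; lia.
have := sum_perm_moment x.
rewrite (eq_bigr (fun=> perm_moment x p p + perm_moment x p q *+ n.-1)) => [|r _].
  rewrite sumr_const card_ord mulrnDl (fact_predn (ltnW n_gt1)) (fact_pred2 n_gt1) !natrM.
  move=> /(canRL (addKr _)) sumE.
  by rewrite -mulrA !mulr_natl sumE perm_moment_diag (fact_pred2 n_gt1) natrM; ring.
rewrite (bigD1 r) //= !perm_moment_diag; congr (_ + _).
rewrite (eq_bigr (fun=> perm_moment x p q)) => [|t]; last first.
  rewrite eq_sym => /negPf neq_tr.
  by apply: perm_moment_eq; rewrite neq_tr (negPf neq_pq).
by rewrite sumr_const cardC1 card_ord.
Qed.

Lemma sum_perm_dotv (c d : 'I_n -> R) : (1 < n)%N -> \sum_p c p = 0 ->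
  \sum_(s : 'S_n) dotv c (x \o s) * dotv d (x \o s)
  = (n - 2)`!%:R * (n%:R * \sum_i x i ^+ 2 - (\sum_i x i) ^+ 2) * dotv c d.
Proof.
move=> n_gt1 sum_c0.
pose off := (n - 2)`!%:R * ((\sum_i x i) ^+ 2 - \sum_i x i ^+ 2).
set gap := (n - 2)`!%:R * _.
have momentE p q : perm_moment x p q = off + (if q == p then gap else 0).
  have [->|neq_qp] := eqVneq q p; last by rewrite perm_moment_offdiag 1?eq_sym // addr0.
  have nE : n%:R = n.-1%:R + 1 :> R by rewrite natr1 prednK // ltnW.
  by rewrite perm_moment_diag /off /gap fact_pred2 // natrM nE; ring.
transitivity (\sum_p \sum_q
                (c p * (d q * off) + (if q == p then c p * d p * gap else 0))).
  under eq_bigr do rewrite big_distrlr /=.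
  rewrite exchange_big; apply: eq_bigr => p _.
  rewrite exchange_big; apply: eq_bigr => q _.
  have -> : c p * (d q * off) + (if q == p then c p * d p * gap else 0)
            = c p * d q * perm_moment x p q.
    by rewrite momentE; case: eqP => [->|_]; ring.
  by rewrite mulr_sumr; apply: eq_bigr => s _; rewrite /=; ring.
under eq_bigr do rewrite big_split /= -big_mkcond big_pred1_eq.
rewrite big_split /= -big_distrlr /= sum_c0 mul0r add0r /dotv mulr_sumr.
by apply: eq_bigr => p _; rewrite mulrC.
Qed.

End PermMomentValue.

Definition Dn (R : nzRingType) (n : nat) (f : {poly R}) : R :=
  n.-1`!%:R ^+ 2 * f`_n.-1 ^+ 2 - 2%:R * (n`! * (n - 2)`!)%:R * f`_n * f`_(n - 2).

Lemma Dn_prod_XaddC (R : comNzRingType) (n : nat) (a : R) (x : 'I_n -> R) :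
  (1 < n)%N ->
  Dn n (a *: \prod_(i < n) ('X + (x i)%:P))
  = a ^+ 2 * (n.-1`! * (n - 2)`!)%:R * (n%:R * \sum_i x i ^+ 2 - (\sum_i x i) ^+ 2).
Proof.
move=> n_gt1; set p := \prod_(i < n) _.
have sizeE : size (index_enum 'I_n) = n.
  by rewrite [index_enum _]unlock -enumT size_enum_ord.
have := coef_prod_XaddC_size (index_enum 'I_n) x.
have [] := coef_prod_XaddC (index_enum 'I_n) x; rewrite sizeE -/p.
have [n_ne0 n1_ne0] : n != 0%N /\ n.-1 != 0%N by split; lia.
rewrite !coefXM (negPf n_ne0) (negPf n1_ne0) -subn2 => e1 e2 top.
transitivity (n.-1`!%:R ^+ 2 * (a * \sum_i x i) ^+ 2
              - (n`! * (n - 2)`!)%:R * a ^+ 2 * (p`_(n - 2) *+ 2)).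
  by rewrite /Dn !coefZ top e1 -mulr_natr; ring.
have nE : n%:R = n.-1%:R + 1 :> R by rewrite natr1 prednK // ltnW.
by rewrite e2 (fact_predn (ltnW n_gt1)) (fact_pred2 n_gt1) !natrM nE; ring.
Qed.

Theorem mainTheorem2 (C : numClosedFieldType) (n : nat) (f : {poly C})
    (x : 'I_n -> C) (b : 'S_n -> nat -> C) :
  (3 <= n)%N ->
  f`_n != 0 ->
  f = f`_n *: \prod_(i < n) ('X + (x i)%:P) ->
  (forall (s : 'S_n) (i : nat), (2 <= i <= n)%N ->
     xperm x s i = xperm x s i.-1 + \sum_(1 <= j < i) b s j) ->
  let D := ((n.-1)`!)%:R ^+ 2 * f`_(n.-1) ^+ 2
           - 2%:R * (n`! * (n - 2)`!)%:R * f`_n * f`_(n - 2) in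
  [/\ D / f`_n ^+ 2 = - (3%:R)^-1 * ((n.-1)`!)%:R * \sum_(s : 'S_n) b s 1%N * b s 2%N,
      (forall i : nat, (i + 4 <= n)%N ->
         D / f`_n ^+ 2 = ((n.-1)`!)%:R * \sum_(s : 'S_n) b s (1 + i)%N * b s (3 + i)%N
         /\ D / f`_n ^+ 2
            = - (4%:R)^-1 * ((n.-1)`!)%:R * \sum_(s : 'S_n) b s (2 + i)%N * b s (3 + i)%N)
    & (forall j k : nat, (1 <= j)%N -> (j < k)%N -> (k <= n.-1)%N ->
         ~ ((j, k) = (1%N, 2%N)) ->
         (forall i : nat, (i + 4 <= n)%N ->
            (j, k) <> ((1 + i)%N, (3 + i)%N) /\ (j, k) <> ((2 + i)%N, (3 + i)%N)) ->
         \sum_(s : 'S_n) b s j * b s k = 0)].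
Proof.
move=> n_ge3 an_neq0 fE recb D; have n_gt1 : (1 < n)%N by lia.
pose gap : C := (n - 2)`!%:R * (n%:R * \sum_i x i ^+ 2 - (\sum_i x i) ^+ 2).
have DE : D / f`_n ^+ 2 = n.-1`!%:R * gap.
  have -> : D = Dn n f by [].
  by rewrite [in Dn n f]fE Dn_prod_XaddC // natrM /gap; field.
have bE s j : (0 < j < n)%N -> b s j = dotv (bvec j) (x \o s).
  move=> lt_jn; rewrite (recurrence_second_diff (recb s)) // dotv_bvec.
  by case: eqP => [_|j_ne1]; rewrite -!xperm_dotv //; lia.
have sum_bb j k : (0 < j)%N -> (j < k < n)%N ->
    \sum_(s : 'S_n) b s j * b s k = gap *
      if k == j.+1 then (if j == 1%N then - 3%:R else - 4%:R)
      else if k == j.+2 then 1 else 0.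
  move=> j_gt0 lt_jkn.
  rewrite -(@dotv_bvec_bvec C n) // /gap -sum_perm_dotv ?sum_bvec //; try lia.
  by apply: eq_bigr => s _; rewrite !bE //; lia.
have nat3 : (3%:R : C) != 0 by rewrite pnatr_eq0.
have nat4 : (4%:R : C) != 0 by rewrite pnatr_eq0.
split.
- by rewrite DE sum_bb //=; try lia; field.
- move=> i le_i4n; rewrite DE !sum_bb; try lia.
  by repeat (case: eqP => ?; try (exfalso; lia)); split; field.
- move=> j k j_gt0 lt_jk le_kn not12 not_others.
  rewrite sum_bb; try lia.
  case: eqP => [ek|_].
    case: eqP => [ej|j_ne1]; first by case: not12; rewrite ek ej.
    by case: (not_others (j - 2)%N) => [|_ []]; [lia | congr (_, _); lia].
  case: eqP => [ek|_]; last by rewrite mulr0.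
  by case: (not_others j.-1) => [|[]]; [lia | congr (_, _); lia].
Qed.
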